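(* Let $n\geq 4$ and let $3\leq i\leq n-1$. Let $p$ be any permutation of length $n$. Then one of $p$ and $c_i(p)$ has exactly one more alternating run than the other; that is, $|\mathrm{run}(p)-\mathrm{run}(c_i(p))|=1$.
   Context: For a permutation $p=p_1p_2\cdots p_n$ and an index $i\in[2,n-1]$, $p$ changes direction at $i$ if $p_{i-1}<p_i>p_{i+1}$ or $p_{i-1}>p_i<p_{i+1}$. The permutation $p$ has $k$ alternating runs (written $\mathrm{run}(p)=k$) if $p$ changes direction exactly $k-1$ times. For a string $s$ of distinct integers with underlying set $S$, the complement of $s$ relative to $S$ is the string obtained from $s$ by replacing, for each $j$, the $j$th smallest element of $S$ by the $j$th largest element of $S$. For $1\leq i\leq n$, $c_i$ is the map on permutations of length $n$ that leaves $p_1\cdots p_{i-1}$ unchanged and replaces the string $p_ip_{i+1}\cdots p_n$ by its complement relative to its underlying set $\{p_i,\dots,p_n\}$. *)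

From mathcomp Require Import all_boot all_order all_fingroup.
Set Implicit Arguments. Unset Strict Implicit. Unset Printing Implicit Defensive.

(* A permutation of length n is p : 'S_n; its one-line notation is the
   word p(0) p(1) ... p(n-1) (values in {0..n-1}; shifting values by 1
   does not affect runs or complements). Positions are 0-based here. *)
Definition word (n : nat) (p : 'S_n) : seq nat := [seq val (p j) | j <- enum 'I_n].

Definition changes_dir (s : seq nat) (j : nat) : bool :=
  let a := nth 0 s j.-1 in let b := nth 0 s j in let c := nth 0 s j.+1 in
  ((a < b) && (b > c)) || ((a > b) && (b < c)).

Definition run (s : seq nat) : nat :=
  (count (changes_dir s) (iota 1 (size s).-2)).+1.

(* complement of a word of distinct integers relative to its underlying set:
   the j-th smallest element is replaced by the j-th largest *)
Definition complement (s : seq nat) : seq nat :=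
  let srt := sort leq s in
  [seq nth 0 srt ((size srt).-1 - index x srt) | x <- s].

(* c_i (1-based i): keep p_1..p_{i-1}, complement p_i..p_n *)
Definition c_map (i : nat) (s : seq nat) : seq nat :=
  take i.-1 s ++ complement (drop i.-1 s).

From mathcomp Require Import all_boot all_order all_fingroup zify.
Set Implicit Arguments. Unset Strict Implicit. Unset Printing Implicit Defensive.

(* For a word of distinct integers, a change of direction at j is a change
   between the ascent/descent bits of the pairs (j-1, j) and (j, j+1), so
   run s - 1 counts the flips of the bit sequence.  Complementing the suffix
   starting at position k = i-1 reverses every comparison inside it: the bits
   of the pairs j >= k are negated, those of the pairs j <= k-2 are kept and
   only the bit of the straddling pair (k-1, k) is uncontrolled.  Negating a
   tail of bits preserves the flips inside it, so only the two flips around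
   the pair k-1 can change, and they change by an odd amount, hence by one. *)

Definition ascent (s : seq nat) (j : nat) : bool := nth 0 s j < nth 0 s j.+1.

Definition flips (b : nat -> bool) (N : nat) : nat :=
  count (fun j => b j.-1 != b j) (iota 1 N).

Lemma flips_negate_tail (b b' : nat -> bool) (k N : nat) :
  2 <= k <= N ->
  (forall j, j.+2 <= k -> b' j = b j) ->
  (forall j, k <= j <= N -> b' j = ~~ b j) ->
  flips b N = (flips b' N).+1 \/ flips b' N = (flips b N).+1.
Proof.
move=> /andP[k2 kN] b'_head b'_tail.
have splitN : iota 1 N = iota 1 (k - 2) ++ [:: k.-1; k] ++ iota k.+1 (N - k).
  rewrite -[in LHS](_ : k - 2 + (2 + (N - k)) = N) ?iotaD /=; last lia.
  by congr (_ ++ [:: _, _ & iota _ _]); lia.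
have head_eq : count (fun j => b' j.-1 != b' j) (iota 1 (k - 2)) =
               count (fun j => b j.-1 != b j) (iota 1 (k - 2)).
  by apply: eq_in_count => j; rewrite mem_iota => /andP[? ?]; rewrite !b'_head //; lia.
have tail_eq : count (fun j => b' j.-1 != b' j) (iota k.+1 (N - k)) =
               count (fun j => b j.-1 != b j) (iota k.+1 (N - k)).
  apply: eq_in_count => j; rewrite mem_iota => /andP[? ?].
  by rewrite !b'_tail ?negb_eqb //; lia.
rewrite /flips splitN !count_cat head_eq tail_eq /=.
have -> : k.-1.-1 = k - 2 by lia.
have -> : b' (k - 2) = b (k - 2) by apply: b'_head; lia.
have -> : b' k = ~~ b k by apply: b'_tail; lia.
(* [(b (k - 2) != x) + (x != c)] has the parity of [b (k - 2) + c] whatever [x]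
   is, and [c] is [b k] on one side and [~~ b k] on the other. *)
by case: (b (k - 2)); case: (b k.-1); case: (b' k.-1); case: (b k) => /=; lia.
Qed.

Lemma neq_nth_succ {T : eqType} (x0 : T) {s : seq T} {j : nat} :
  uniq s -> j.+1 < size s -> nth x0 s j != nth x0 s j.+1.
Proof. by move=> us js; rewrite nth_uniq ?neq_ltn ?ltnSn // ltnW. Qed.

Lemma changes_dir_ascent (s : seq nat) (j : nat) : uniq s -> 0 < j -> j.+1 < size s ->
  changes_dir s j = (ascent s j.-1 != ascent s j).
Proof.
move=> us j0 js; rewrite /changes_dir /ascent prednK //.
have ab : nth 0 s j.-1 != nth 0 s j.
  by rewrite -{2}(prednK j0) neq_nth_succ // prednK // ltnW.
move: ab (neq_nth_succ 0 us js).
by case: ltngtP => //= _; case: ltngtP.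
Qed.

Lemma run_flips (s : seq nat) : uniq s -> run s = (flips (ascent s) (size s).-2).+1.
Proof.
move=> us; congr _.+1; apply: eq_in_count => j; rewrite mem_iota => /andP[? ?].
by rewrite changes_dir_ascent //; lia.
Qed.

Lemma ascent_cat_l (u v : seq nat) (j : nat) :
  j.+1 < size u -> ascent (u ++ v) j = ascent u j.
Proof. by move=> ju; rewrite /ascent !nth_cat ju (ltnW ju). Qed.

Lemma ascent_cat_r (u v : seq nat) (j : nat) :
  size u <= j -> ascent (u ++ v) j = ascent v (j - size u).
Proof. by move=> uj; rewrite /ascent !nth_cat (leq_gtF uj) (leq_gtF (leqW uj)) subSn. Qed.

Lemma ascent_take (k : nat) (s : seq nat) (j : nat) :
  j.+1 < k -> ascent (take k s) j = ascent s j.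
Proof. by move=> jk; rewrite /ascent !nth_take // ltnW. Qed.

Lemma ascent_drop (k : nat) (s : seq nat) (j : nat) :
  ascent (drop k s) j = ascent s (k + j).
Proof. by rewrite /ascent !nth_drop addnS. Qed.

Lemma ltn_nth_sorted (t : seq nat) (a b : nat) : sorted ltn t ->
  a < size t -> b < size t -> (nth 0 t a < nth 0 t b) = (a < b).
Proof.
move=> st ha hb; case: (ltngtP a b) => [ab|ba|->]; last exact: ltnn.
- exact: (sorted_ltn_nth ltn_trans).
- by apply/negbTE; rewrite -leqNgt ltnW //; apply: (sorted_ltn_nth ltn_trans).
Qed.

Definition compl_val (s : seq nat) (x : nat) : nat :=
  let srt := sort leq s in nth 0 srt ((size srt).-1 - index x srt).

Lemma complementE (s : seq nat) : complement s = map (compl_val s) s.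
Proof. by []. Qed.

Lemma compl_val_ltE (s : seq nat) (x y : nat) : uniq s -> x \in s -> y \in s ->
  (compl_val s x < compl_val s y) = (y < x).
Proof.
move=> us xs ys; rewrite /compl_val; set t := sort leq s.
have st : sorted ltn t by rewrite ltn_sorted_uniq_leq sort_uniq us sort_sorted //; exact: leq_total.
have xt : x \in t by rewrite mem_sort.
have yt : y \in t by rewrite mem_sort.
have ix : index x t < size t by rewrite index_mem.
have iy : index y t < size t by rewrite index_mem.
rewrite ltn_nth_sorted //; try lia.
by rewrite -{2}(nth_index 0 xt) -{2}(nth_index 0 yt) ltn_nth_sorted //; lia.
Qed.

Lemma compl_val_mem (s : seq nat) (x : nat) : x \in s -> compl_val s x \in s.
Proof.
move=> xs; have xt : x \in sort leq s by rewrite mem_sort.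
rewrite /compl_val -(mem_sort leq) mem_nth // (leq_ltn_trans (leq_subr _ _)) //.
by rewrite ltn_predL; case: (sort leq s) xt.
Qed.

Lemma compl_val_inj (s : seq nat) : uniq s -> {in s &, injective (compl_val s)}.
Proof.
move=> us x y xs ys exy.
have := compl_val_ltE us xs ys; have := compl_val_ltE us ys xs.
by rewrite exy ltnn; case: ltngtP.
Qed.

Lemma perm_complement (s : seq nat) : uniq s -> perm_eq (complement s) s.
Proof.
move=> us; have uc : uniq (complement s) by rewrite map_inj_in_uniq //; exact: compl_val_inj.
apply: uniq_perm => //.
have sub_cs : {subset complement s <= s} by move=> _ /mapP[x xs ->]; exact: compl_val_mem.
by have [] := uniq_min_size uc sub_cs (eq_leq (esym (size_map _ _))).
Qed.

Lemma ascent_complement (s : seq nat) (j : nat) : uniq s -> j.+1 < size s ->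
  ascent (complement s) j = ~~ ascent s j.
Proof.
move=> us js; rewrite /ascent complementE !(nth_map 0) ?compl_val_ltE ?mem_nth ?(ltnW js) //.
by move: (neq_nth_succ 0 us js); case: ltngtP.
Qed.

Lemma perm_c_map (i : nat) (s : seq nat) : uniq s -> perm_eq (c_map i s) s.
Proof.
move=> us; rewrite -[s in perm_eq _ s](cat_take_drop i.-1) perm_cat2l.
by rewrite perm_complement // drop_uniq.
Qed.

Lemma ascent_c_map_head (i : nat) (s : seq nat) (j : nat) :
  i.-1 <= size s -> j.+2 <= i.-1 -> ascent (c_map i s) j = ascent s j.
Proof.
by move=> ks jk; rewrite ascent_cat_l ?ascent_take // size_takel.
Qed.

Lemma ascent_c_map_tail (i : nat) (s : seq nat) (j : nat) : uniq s ->
  i.-1 <= j -> j.+1 < size s -> ascent (c_map i s) j = ~~ ascent s j.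
Proof.
move=> us kj js; have ks : i.-1 <= size s by lia.
rewrite ascent_cat_r size_takel // ascent_complement ?drop_uniq ?size_drop; try lia.
by rewrite ascent_drop subnKC.
Qed.

Lemma size_word (n : nat) (p : 'S_n) : size (word p) = n.
Proof. by rewrite size_map size_enum_ord. Qed.

Lemma word_uniq (n : nat) (p : 'S_n) : uniq (word p).
Proof. by rewrite map_inj_uniq ?enum_uniq // => x y /val_inj /perm_inj. Qed.

Theorem mainTheorem1 (n : nat) (p : 'S_n) (i : nat) :
  4 <= n -> 3 <= i <= n - 1 ->
  run (word p) = (run (c_map i (word p))).+1 \/
  run (c_map i (word p)) = (run (word p)).+1.
Proof.
move=> n4 /andP[i3 i_n]; set w := word p.
have uw : uniq w := word_uniq p.
have perm_w := perm_c_map i uw.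
rewrite !run_flips ?(perm_uniq perm_w) // (perm_size perm_w) size_word.
have [] := @flips_negate_tail (ascent w) (ascent (c_map i w)) i.-1 n.-2.
- by apply/andP; lia.
- by move=> j jk; rewrite ascent_c_map_head ?size_word //; lia.
- by move=> j /andP[kj jN]; rewrite ascent_c_map_tail ?size_word //; lia.
- by move=> ->; left.
- by move=> ->; right.
Qed.
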